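(* There exists a constant $C$ (depending on the maximal curvature of $\Gamma$ but independent of the interface location relative to the mesh) such that, for $h$ small enough, every interface element $T$ satisfies $|T_{int}|\le Ch^3$, where $|\cdot|$ denotes area.
   Context: $\mathcal T_h$ is a Cartesian triangular or rectangular mesh of size $h$ of a bounded planar domain containing a curve $\Gamma$ that is $C^2$ inside each interface element (an element whose interior meets $\Gamma$), and which meets the boundary of each interface element $T$ at exactly two points $D,E$ lying on different edges. The set $T_{int}=\bigcup\{l_t\cap T: l_t \text{ is a tangent line to } \Gamma\cap T\}$ is the region of $T$ swept by tangent lines to $\Gamma\cap T$. *)

From Stdlib Require Import Reals Lra List.
Open Scope R_scope.

Definition pt : Type := (R * R)%type.

Definition on_segment (p q z : pt) : Prop :=
  exists s, 0 <= s <= 1 /\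
    fst z = fst p + s * (fst q - fst p) /\ snd z = snd p + s * (snd q - snd p).

(* Elements of a Cartesian mesh of size h whose cell has lower-left corner (a,b):
   the square cell itself, or one of the triangles obtained by cutting the cell
   along a diagonal (the triangle is identified by the omitted corner). *)
Inductive corner := C0 | C1 | C2 | C3.
Inductive elem_kind := Square | Triangle (omitted : corner).

Definition corner_pt (a b h : R) (c : corner) : pt :=
  match c with
  | C0 => (a, b) | C1 => (a + h, b) | C2 => (a + h, b + h) | C3 => (a, b + h)
  end.

Definition in_elem (k : elem_kind) (a b h : R) (p : pt) : Prop :=
  let x := fst p - a in let y := snd p - b in
  0 <= x <= h /\ 0 <= y <= h /\
  match k with
  | Square => True
  | Triangle C0 => x + y >= h
  | Triangle C2 => x + y <= h
  | Triangle C1 => y >= x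
  | Triangle C3 => y <= x
  end.

Definition elem_edges (k : elem_kind) (a b h : R) : list (pt * pt) :=
  let c := corner_pt a b h in
  match k with
  | Square => (c C0, c C1) :: (c C1, c C2) :: (c C2, c C3) :: (c C3, c C0) :: nil
  | Triangle C0 => (c C1, c C2) :: (c C2, c C3) :: (c C3, c C1) :: nil
  | Triangle C1 => (c C2, c C3) :: (c C3, c C0) :: (c C0, c C2) :: nil
  | Triangle C2 => (c C3, c C0) :: (c C0, c C1) :: (c C1, c C3) :: nil
  | Triangle C3 => (c C0, c C1) :: (c C1, c C2) :: (c C2, c C0) :: nil
  end.

Definition on_boundary (k : elem_kind) (a b h : R) (p : pt) : Prop :=
  exists e, In e (elem_edges k a b h) /\ on_segment (fst e) (snd e) p.

Definition curvature (dx dy ddx ddy : R) : R :=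
  Rabs (dx * ddy - dy * ddx) / (sqrt (dx ^ 2 + dy ^ 2)) ^ 3.

(* Upper (outer Jordan) area bound: S can be covered by finitely many
   axis-parallel rectangles (x0,x1,y0,y1) of total area at most A + eps, for every eps > 0. *)
Definition rect : Type := (R * R * R * R)%type.
Definition in_rect (r : rect) (p : pt) : Prop :=
  let '(x0, x1, y0, y1) := r in x0 <= fst p <= x1 /\ y0 <= snd p <= y1.
Definition rect_area (r : rect) : R :=
  let '(x0, x1, y0, y1) := r in (x1 - x0) * (y1 - y0).
Definition rect_ok (r : rect) : Prop :=
  let '(x0, x1, y0, y1) := r in x0 <= x1 /\ y0 <= y1.

Definition area_le (S : pt -> Prop) (A : R) : Prop :=
  forall eps, 0 < eps ->
    exists rs : list rect,
      Forall rect_ok rs /\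
      (forall p, S p -> exists r, In r rs /\ in_rect r p) /\
      fold_right Rplus 0 (map rect_area rs) <= A + eps.

Record C2_curve := {
  cx : R -> R; cy : R -> R;
  cdx : R -> R; cdy : R -> R;
  cddx : R -> R; cddy : R -> R;
  cx_der : forall t, derivable_pt_lim cx t (cdx t);
  cy_der : forall t, derivable_pt_lim cy t (cdy t);
  cdx_der : forall t, derivable_pt_lim cdx t (cddx t);
  cdy_der : forall t, derivable_pt_lim cdy t (cddy t);
  cddx_cont : continuity cddx;
  cddy_cont : continuity cddy
}.

Definition gam (g : C2_curve) (t : R) : pt := (cx g t, cy g t).

(* Gamma ∩ T is the arc g([0,1]): regular, curvature <= kappa, inside T,
   meeting the boundary of T exactly at its two endpoints D = g 0 and E = g 1,
   which are distinct and lie on different edges. *)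
Definition interface_arc (k : elem_kind) (a b h kappa : R) (g : C2_curve) : Prop :=
  (forall t, 0 <= t <= 1 -> 0 < cdx g t ^ 2 + cdy g t ^ 2) /\
  (forall t, 0 <= t <= 1 ->
     curvature (cdx g t) (cdy g t) (cddx g t) (cddy g t) <= kappa) /\
  (forall t, 0 <= t <= 1 -> in_elem k a b h (gam g t)) /\
  (forall t, 0 < t < 1 -> ~ on_boundary k a b h (gam g t)) /\
  gam g 0 <> gam g 1 /\
  (exists e1 e2, In e1 (elem_edges k a b h) /\ In e2 (elem_edges k a b h) /\ e1 <> e2 /\
     on_segment (fst e1) (snd e1) (gam g 0) /\ on_segment (fst e2) (snd e2) (gam g 1)).

Definition T_int (k : elem_kind) (a b h : R) (g : C2_curve) (p : pt) : Prop :=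
  in_elem k a b h p /\
  exists t s, 0 <= t <= 1 /\
    fst p = cx g t + s * cdx g t /\ snd p = cy g t + s * cdy g t.

From Stdlib Require Import Reals Lra List Lia Classical.
Open Scope R_scope.

(* Measure the tangent of the arc against the initial tangent v = γ'(0) through
   p = v·γ' and q = v×γ'.  As long as the tangent stays within a fixed angle of v,
   the curvature bound gives |(q/p)'| <= (2κ/M) p with M = max(|v_x|,|v_y|), and p is
   the derivative of v·γ, which varies by at most 2Mh inside the cell; hence
   |q/p| <= 4κh.  For small h this is a strictly better angle than the one assumed,
   so by continuous induction the estimate holds on the whole arc.  Integrating once
   more, every tangent line meets T within distance O(κh²) of the initial tangent
   line, so T_int lies in a strip of width O(κh²) over an interval of length h. *)

Lemma Rabs_le_inv x y : Rabs x <= y -> - y <= x <= y.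
Proof. unfold Rabs; destruct Rcase_abs; intros; lra. Qed.

Lemma area_le_weaken (S S' : pt -> Prop) A A' :
  area_le S A -> (forall z, S' z -> S z) -> A <= A' -> area_le S' A'.
Proof.
  intros HS HS' HA eps Heps. destruct (HS eps Heps) as [rs [Hok [Hcov Hsum]]].
  exists rs; split; [exact Hok|split].
  - intros p Hp; apply Hcov, HS', Hp.
  - lra.
Qed.

Definition rect_transpose (r : rect) : rect :=
  let '(x0, x1, y0, y1) := r in (y0, y1, x0, x1).

Lemma area_le_transpose (S : pt -> Prop) A :
  area_le (fun z => S (snd z, fst z)) A -> area_le S A.
Proof.
  intros HS eps Heps. destruct (HS eps Heps) as [rs [Hok [Hcov Hsum]]].
  exists (map rect_transpose rs); split; [|split].
  - apply Forall_forall; intros r Hr. apply in_map_iff in Hr.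
    destruct Hr as [r' [<- Hr']]. rewrite Forall_forall in Hok.
    specialize (Hok r' Hr'). destruct r' as [[[x0 x1] y0] y1]; simpl in *; tauto.
  - intros [x y] Hp. destruct (Hcov (y, x)) as [r [Hr Hin]]; [exact Hp|].
    exists (rect_transpose r); split; [apply in_map; exact Hr|].
    destruct r as [[[x0 x1] y0] y1]; simpl in *; tauto.
  - rewrite map_map.
    replace (map (fun r => rect_area (rect_transpose r)) rs) with (map rect_area rs); [lra|].
    apply map_ext; intros [[[x0 x1] y0] y1]; simpl; ring.
Qed.

Lemma sum_rect_area_const (l : list nat) (f : nat -> rect) c :
  (forall i, rect_area (f i) = c) ->
  fold_right Rplus 0 (map rect_area (map f l)) = INR (length l) * c.
Proof.
  intros Hf; induction l as [|i l IH]; simpl; [ring|].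
  rewrite IH, Hf. destruct (length l); simpl; ring.
Qed.

Lemma slab_index (a w x : R) (n : nat) : 0 < w -> (1 <= n)%nat ->
  a <= x <= a + INR n * w ->
  exists i, (i < n)%nat /\ a + INR i * w <= x <= a + INR (S i) * w.
Proof.
  intros Hw Hn; induction n as [|n IH]; [lia|].
  intros Hx. destruct (Rle_dec x (a + INR n * w)) as [Hle|Hgt].
  - destruct n as [|n'].
    + simpl in *. exists 0%nat; split; [lia|]. simpl. lra.
    + destruct IH as [i [Hi Hi']]; [lia|lra|]. exists i; split; [lia|exact Hi'].
  - exists n; split; [lia|lra].
Qed.

(* Cover the strip by M thin rectangles of width w = h/M; the slope bound |rho| <= 1
   costs an extra height 2w per rectangle, i.e. 2hw in total, which M makes small. *)
Lemma area_le_strip (rho x0 y0 a h W : R) :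
  Rabs rho <= 1 -> 0 < h -> 0 <= W ->
  area_le (fun z => a <= fst z <= a + h /\ Rabs (snd z - y0 - rho * (fst z - x0)) <= W)
          (2 * W * h).
Proof.
  intros Hrho Hh HW eps Heps.
  destruct (INR_archimed eps (2 * h * h) Heps) as [N HN].
  set (M := S N).
  assert (HM : 0 < INR M) by (apply lt_0_INR; unfold M; lia).
  assert (HNM : INR N <= INR M) by (apply le_INR; unfold M; lia).
  set (w := h / INR M).
  assert (Hw : 0 < w) by (unfold w; apply Rdiv_lt_0_compat; lra).
  assert (HwM : INR M * w = h) by (unfold w; field; lra).
  set (f := fun i : nat =>
     let c := y0 + rho * (a + INR i * w - x0) in
     (a + INR i * w, a + INR i * w + w, c - w - W, c + w + W)).
  exists (map f (seq 0 M)); split; [|split].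
  - apply Forall_forall; intros r Hr. apply in_map_iff in Hr.
    destruct Hr as [i [<- _]]. unfold f; simpl. lra.
  - intros [x y] [Hx Hy]; simpl in Hx, Hy.
    destruct (slab_index a w x M Hw) as [i [Hi Hslab]]; [unfold M; lia|lra|].
    exists (f i); split.
    + apply in_map, in_seq; lia.
    + rewrite S_INR in Hslab. unfold f; simpl. split; [lra|].
      assert (Hd : Rabs (rho * (x - (a + INR i * w))) <= w).
      { rewrite Rabs_mult, (Rabs_right (x - _)) by lra.
        replace w with (1 * w) at 2 by ring.
        apply Rmult_le_compat; try lra; apply Rabs_pos. }
      apply Rabs_le_inv in Hy; apply Rabs_le_inv in Hd. nra.
  - rewrite (sum_rect_area_const _ f (w * (2 * w + 2 * W))) by (intros i; unfold f; simpl; ring).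
    rewrite length_seq.
    replace (INR M * (w * (2 * w + 2 * W))) with (2 * W * h + 2 * h * w)
      by (rewrite <- HwM; ring).
    assert (2 * h * w * INR N <= 2 * h * h).
    { unfold w. replace (2 * h * (h / INR M) * INR N) with (2 * h * h * (INR N / INR M))
        by (field; lra).
      assert (INR N / INR M <= 1).
      { apply Rmult_le_reg_r with (INR M); [lra|]. field_simplify; lra. }
      nra. }
    assert (2 * h * w <= eps).
    { destruct (Nat.eq_dec N 0) as [E|E].
      - rewrite E in HN; simpl in HN; nra.
      - assert (1 <= INR N) by (apply (le_INR 1); lia). nra. }
    lra.
Qed.

Lemma area_le_near_line (S : pt -> Prop) (a b h vx vy x0 y0 W : R) :
  0 < h -> 0 <= W -> 0 < vx ^ 2 + vy ^ 2 ->
  (forall z, S z -> a <= fst z <= a + h /\ b <= snd z <= b + h /\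
     Rabs (vx * (snd z - y0) - vy * (fst z - x0)) <= Rmax (Rabs vx) (Rabs vy) * W) ->
  area_le S (2 * W * h).
Proof.
  intros Hh HW Hv HS.
  destruct (Rle_dec (Rabs vy) (Rabs vx)) as [Hxy|Hyx].
  - assert (HM : Rmax (Rabs vx) (Rabs vy) = Rabs vx) by (apply Rmax_left; lra).
    assert (Hvx : 0 < Rabs vx).
    { rewrite <- (pow2_abs vx), <- (pow2_abs vy) in Hv.
      pose proof (Rabs_pos vx); pose proof (Rabs_pos vy); nra. }
    eapply area_le_weaken; [apply (area_le_strip (vy / vx) x0 y0 a h W) | | lra]; try lra.
    + unfold Rdiv; rewrite Rabs_mult, Rabs_inv.
      apply Rmult_le_reg_r with (Rabs vx); [lra|]. field_simplify; lra.
    + intros z Hz. destruct (HS z Hz) as [Hzx [_ Hline]]. split; [exact Hzx|].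
      rewrite HM in Hline. apply Rmult_le_reg_l with (Rabs vx); [lra|].
      rewrite <- Rabs_mult.
      replace (vx * (snd z - y0 - vy / vx * (fst z - x0)))
        with (vx * (snd z - y0) - vy * (fst z - x0)) by (field; intros E; rewrite E, Rabs_R0 in *; lra).
      exact Hline.
  - assert (HM : Rmax (Rabs vx) (Rabs vy) = Rabs vy) by (apply Rmax_right; lra).
    assert (Hvy : 0 < Rabs vy) by (pose proof (Rabs_pos vx); lra).
    apply area_le_transpose.
    eapply area_le_weaken; [apply (area_le_strip (vx / vy) y0 x0 b h W) | | lra]; try lra.
    + unfold Rdiv; rewrite Rabs_mult, Rabs_inv.
      apply Rmult_le_reg_r with (Rabs vy); [lra|]. field_simplify; lra.
    + intros [x y] Hz; simpl in Hz |- *. destruct (HS _ Hz) as [_ [Hzy Hline]].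
      simpl in Hzy, Hline. split; [exact Hzy|].
      rewrite HM in Hline. apply Rmult_le_reg_l with (Rabs vy); [lra|].
      rewrite <- Rabs_mult.
      replace (vy * (y - x0 - vx / vy * (x - y0)))
        with (- (vx * (x - y0) - vy * (y - x0))) by (field; intros E; rewrite E, Rabs_R0 in *; lra).
      rewrite Rabs_Ropp. exact Hline.
Qed.

(* Two mean value theorems, for f - g and f + g. *)
Lemma Rabs_increment_le f g f' g' l r : l <= r ->
  (forall c, l <= c <= r -> derivable_pt_lim f c (f' c)) ->
  (forall c, l <= c <= r -> derivable_pt_lim g c (g' c)) ->
  (forall c, l <= c <= r -> Rabs (f' c) <= g' c) ->
  Rabs (f r - f l) <= g r - g l.
Proof.
  intros Hlr Hf Hg Hdom. destruct (Req_dec l r) as [<-|Hne].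
  { unfold Rminus; rewrite !Rplus_opp_r, Rabs_R0; lra. }
  assert (Hlt : l < r) by lra.
  destruct (MVT_cor2 (fun x => f x - g x) (fun x => f' x - g' x) l r Hlt) as [c1 [E1 Hc1]].
  { intros c Hc. exact (derivable_pt_lim_minus _ _ _ _ _ (Hf c Hc) (Hg c Hc)). }
  destruct (MVT_cor2 (fun x => f x + g x) (fun x => f' x + g' x) l r Hlt) as [c2 [E2 Hc2]].
  { intros c Hc. exact (derivable_pt_lim_plus _ _ _ _ _ (Hf c Hc) (Hg c Hc)). }
  pose proof (Rabs_le_inv _ _ (Hdom c1 ltac:(lra))).
  pose proof (Rabs_le_inv _ _ (Hdom c2 ltac:(lra))).
  assert ((f' c1 - g' c1) * (r - l) <= 0) by nra.
  assert ((f' c2 + g' c2) * (r - l) >= 0) by nra.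
  apply Rabs_le; lra.
Qed.

Lemma continuity_pt_pos_near f t : continuity_pt f t -> 0 < f t ->
  exists d, 0 < d /\ forall s, Rabs (s - t) < d -> 0 < f s.
Proof.
  intros Hf Hpos. destruct (Hf (f t) Hpos) as [d [Hd Hnear]]. exists d; split; [lra|].
  intros s Hs. destruct (Req_dec s t) as [->|Hne]; [lra|].
  assert (Hfs := Hnear s (conj (conj I (not_eq_sym Hne)) Hs)). simpl in Hfs.
  unfold R_dist in Hfs. apply Rabs_def2 in Hfs. lra.
Qed.

Lemma continuity_pt_ge0_left f l t : continuity_pt f t -> l < t ->
  (forall s, l <= s < t -> 0 <= f s) -> 0 <= f t.
Proof.
  intros Hf Hlt Hleft. destruct (Rle_dec 0 (f t)) as [|Hneg]; [assumption|].
  exfalso. destruct (continuity_pt_pos_near (fun x => - f x) t) as [d [Hd Hnear]].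
  - apply continuity_pt_opp; exact Hf.
  - lra.
  - set (s := Rmax l (t - d / 2)).
    assert (l <= s < t) by (unfold s, Rmax; destruct Rle_dec; lra).
    assert (Rabs (s - t) < d) by (apply Rabs_def1; unfold s, Rmax; destruct Rle_dec; lra).
    specialize (Hnear s ltac:(assumption)). specialize (Hleft s ltac:(assumption)). lra.
Qed.

Lemma real_induction (P : R -> Prop) (l r : R) : l <= r -> P l ->
  (forall t, l < t <= r -> (forall s, l <= s < t -> P s) -> P t) ->
  (forall t, l <= t < r -> (forall s, l <= s <= t -> P s) ->
      exists d, 0 < d /\ forall s, t < s < t + d -> P s) ->
  forall t, l <= t <= r -> P t.
Proof.
  intros Hlr Hl Hclosed Hopen.
  set (E := fun x => l <= x <= r /\ forall s, l <= s <= x -> P s).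
  assert (El : E l) by (split; [lra|]; intros s Hs; replace s with l by lra; exact Hl).
  destruct (completeness E) as [tau [Hub Hlub]].
  { exists r; intros x [Hx _]; lra. }
  { exists l; exact El. }
  assert (Htau : l <= tau <= r) by (split; [apply Hub, El|apply Hlub; intros x [Hx _]; lra]).
  assert (Hbelow : forall s, l <= s < tau -> P s).
  { intros s Hs. destruct (classic (exists x, E x /\ s <= x)) as [[x [[_ Hx] Hsx]]|Hnone].
    - apply Hx; lra.
    - exfalso. assert (s < s); [|lra].
      apply Rlt_le_trans with tau; [lra|]. apply Hlub.
      intros x Ex. destruct (Rle_dec x s); [assumption|].
      exfalso; apply Hnone; exists x; split; [assumption|lra]. }
  assert (Etau : E tau).
  { split; [exact Htau|]. intros s Hs.
    destruct (Req_dec s tau) as [->|Hne]; [|apply Hbelow; lra].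
    destruct (Req_dec tau l) as [->|Hne']; [exact Hl|]. apply Hclosed; [lra|exact Hbelow]. }
  destruct (Req_dec tau r) as [<-|Hne].
  { intros t Ht. apply (proj2 Etau); lra. }
  exfalso. destruct (Hopen tau ltac:(lra) (proj2 Etau)) as [d [Hd Hright]].
  set (x := Rmin (tau + d / 2) r).
  assert (Ex : E x).
  { split; [unfold x, Rmin; destruct Rle_dec; lra|].
    intros s Hs. destruct (Rle_dec s tau); [apply (proj2 Etau); lra|].
    apply Hright. unfold x, Rmin in Hs; destruct Rle_dec in Hs; lra. }
  assert (Hxt : x <= tau) by (apply Hub, Ex).
  unfold x, Rmin in Hxt; destruct Rle_dec in Hxt; lra.
Qed.

Section TangentCoordinates.
Variables (g : C2_curve) (vx vy : R).

Definition proj_tangent u := vx * cdx g u + vy * cdy g u.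
Definition cross_tangent u := vx * cdy g u - vy * cdx g u.
Definition proj_curve u := vx * cx g u + vy * cy g u.
Definition cross_curve u := vx * cy g u - vy * cx g u.

Lemma proj_tangent_derive u :
  derivable_pt_lim proj_tangent u (vx * cddx g u + vy * cddy g u).
Proof.
  exact (derivable_pt_lim_plus _ _ _ _ _ (derivable_pt_lim_scal _ vx _ _ (cdx_der g u))
    (derivable_pt_lim_scal _ vy _ _ (cdy_der g u))).
Qed.

Lemma cross_tangent_derive u :
  derivable_pt_lim cross_tangent u (vx * cddy g u - vy * cddx g u).
Proof.
  exact (derivable_pt_lim_minus _ _ _ _ _ (derivable_pt_lim_scal _ vx _ _ (cdy_der g u))
    (derivable_pt_lim_scal _ vy _ _ (cdx_der g u))).
Qed.

Lemma proj_curve_derive u : derivable_pt_lim proj_curve u (proj_tangent u).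
Proof.
  exact (derivable_pt_lim_plus _ _ _ _ _ (derivable_pt_lim_scal _ vx _ _ (cx_der g u))
    (derivable_pt_lim_scal _ vy _ _ (cy_der g u))).
Qed.

Lemma cross_curve_derive u : derivable_pt_lim cross_curve u (cross_tangent u).
Proof.
  exact (derivable_pt_lim_minus _ _ _ _ _ (derivable_pt_lim_scal _ vx _ _ (cy_der g u))
    (derivable_pt_lim_scal _ vy _ _ (cx_der g u))).
Qed.

Lemma continuity_pt_tangent_comb c e u :
  continuity_pt (fun u => c * proj_tangent u + e * cross_tangent u) u.
Proof.
  apply (derivable_continuous_pt _ u (exist _ _
    (derivable_pt_lim_plus _ _ _ _ _ (derivable_pt_lim_scal _ c _ _ (proj_tangent_derive u))
       (derivable_pt_lim_scal _ e _ _ (cross_tangent_derive u))))).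
Qed.

End TangentCoordinates.

Lemma Rmax_abs_pos vx vy : 0 < vx ^ 2 + vy ^ 2 ->
  0 < Rmax (Rabs vx) (Rabs vy) /\ Rmax (Rabs vx) (Rabs vy) ^ 2 <= vx ^ 2 + vy ^ 2.
Proof.
  intros Hv. rewrite <- (pow2_abs vx), <- (pow2_abs vy) in *.
  pose proof (Rabs_pos vx). pose proof (Rabs_pos vy).
  unfold Rmax; destruct Rle_dec; split; nra.
Qed.

(* With p = v·d and q = v×d, the derivative of q/p is |v|² (d×d') / p², and
   |v|²|d|² = p² + q² <= (5/4) p², which trades |d|³ for p³ up to the factor 2. *)
Lemma slope_derivative_bound (vx vy dx dy ddx ddy M kappa : R) :
  0 <= kappa -> 0 < M -> M ^ 2 <= vx ^ 2 + vy ^ 2 -> 0 < dx ^ 2 + dy ^ 2 ->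
  curvature dx dy ddx ddy <= kappa ->
  0 < vx * dx + vy * dy -> Rabs (vx * dy - vy * dx) <= (vx * dx + vy * dy) / 2 ->
  Rabs (((vx * ddy - vy * ddx) * (vx * dx + vy * dy)
         - (vx * ddx + vy * ddy) * (vx * dy - vy * dx)) / Rsqr (vx * dx + vy * dy))
    <= 2 * kappa / M * (vx * dx + vy * dy).
Proof.
  intros Hk HM HMv Hd Hcurv Hp Hq.
  set (p := vx * dx + vy * dy) in *. set (q := vx * dy - vy * dx) in *.
  set (cr := dx * ddy - dy * ddx). set (v2 := vx ^ 2 + vy ^ 2) in *.
  set (S := dx ^ 2 + dy ^ 2) in *. set (sd := sqrt S).
  assert (Hsd : 0 < sd) by (apply sqrt_lt_R0; lra).
  assert (Hsd2 : sd * sd = S) by (apply sqrt_sqrt; lra).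
  assert (Enum : (vx * ddy - vy * ddx) * p - (vx * ddx + vy * ddy) * q = v2 * cr)
    by (unfold p, q, v2, cr; ring).
  assert (Enorm : v2 * S = p * p + q * q) by (unfold p, q, v2, S; ring).
  assert (Hcr : Rabs cr <= kappa * sd ^ 3).
  { unfold curvature in Hcurv. fold cr S sd in Hcurv.
    assert (0 < sd ^ 3) by (apply pow_lt; lra).
    apply Rmult_le_reg_r with (/ sd ^ 3); [apply Rinv_0_lt_compat; lra|].
    replace (kappa * sd ^ 3 * / sd ^ 3) with kappa by (field; lra). exact Hcurv. }
  assert (Hq2 : q * q <= p * p / 4).
  { assert (Rabs q * Rabs q <= (p / 2) * (p / 2))
      by (apply Rmult_le_compat; try apply Rabs_pos; lra).
    rewrite <- Rabs_mult, Rabs_right in H by nra. lra. }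
  assert (Hv2 : v2 * (sd * sd) <= 5 / 4 * (p * p)) by (rewrite Hsd2; lra).
  assert (HMsd : M * sd <= 6 / 5 * p).
  { assert ((M * sd) * (M * sd) <= (6 / 5 * p) * (6 / 5 * p)).
    { replace ((M * sd) * (M * sd)) with (M ^ 2 * (sd * sd)) by ring.
      assert (M ^ 2 * (sd * sd) <= v2 * (sd * sd)) by (apply Rmult_le_compat_r; nra). nra. }
    nra. }
  rewrite Enum. unfold Rdiv. rewrite Rabs_mult, Rabs_mult.
  rewrite (Rabs_right v2) by (unfold v2; nra).
  rewrite (Rabs_right (/ p²)) by (left; apply Rinv_0_lt_compat; unfold Rsqr; nra).
  assert (Hcube : v2 * (kappa * sd ^ 3) * M <= 2 * kappa * (p * p * p)).
  { replace (v2 * (kappa * sd ^ 3) * M) with (kappa * ((v2 * (sd * sd)) * (M * sd))) by ring.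
    assert ((v2 * (sd * sd)) * (M * sd) <= (5 / 4 * (p * p)) * (6 / 5 * p))
      by (apply Rmult_le_compat; try lra; [unfold v2; nra | nra]).
    replace (2 * kappa * (p * p * p)) with (kappa * (2 * (p * p * p))) by ring.
    apply Rmult_le_compat_l; nra. }
  apply Rmult_le_reg_r with (p² * M); [unfold Rsqr; apply Rmult_lt_0_compat; [apply Rmult_lt_0_compat|]; lra|].
  replace (v2 * Rabs cr * / p² * (p² * M)) with (v2 * Rabs cr * M) by (field; unfold Rsqr; nra).
  replace (2 * kappa * / M * p * (p² * M)) with (2 * kappa * (p * p * p))
    by (unfold Rsqr; field; lra).
  assert (v2 * Rabs cr * M <= v2 * (kappa * sd ^ 3) * M).
  { apply Rmult_le_compat_r; [lra|]. apply Rmult_le_compat_l; [unfold v2; nra|exact Hcr]. }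
  lra.
Qed.

Lemma in_elem_cell k a b h z : in_elem k a b h z -> a <= fst z <= a + h /\ b <= snd z <= b + h.
Proof. unfold in_elem; intros [Hx [Hy _]]; lra. Qed.

Lemma in_elem_proj_diff k a b h vx vy z1 z2 :
  in_elem k a b h z1 -> in_elem k a b h z2 ->
  Rabs (vx * (fst z1 - fst z2) + vy * (snd z1 - snd z2)) <= 2 * Rmax (Rabs vx) (Rabs vy) * h.
Proof.
  intros H1 H2. apply in_elem_cell in H1. apply in_elem_cell in H2.
  set (M := Rmax (Rabs vx) (Rabs vy)).
  assert (Hx : Rabs vx * Rabs (fst z1 - fst z2) <= M * h).
  { apply Rmult_le_compat; try apply Rabs_pos; [apply Rmax_l|apply Rabs_le; lra]. }
  assert (Hy : Rabs vy * Rabs (snd z1 - snd z2) <= M * h).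
  { apply Rmult_le_compat; try apply Rabs_pos; [apply Rmax_r|apply Rabs_le; lra]. }
  eapply Rle_trans; [apply Rabs_triang|]. rewrite !Rabs_mult. lra.
Qed.

Section InterfaceArc.
Variables (k : elem_kind) (a b h kappa : R) (g : C2_curve).
Hypotheses (kappa_ge0 : 0 <= kappa) (h_gt0 : 0 < h) (arc : interface_arc k a b h kappa g).

Local Notation vx := (cdx g 0).
Local Notation vy := (cdy g 0).
Local Notation M := (Rmax (Rabs (cdx g 0)) (Rabs (cdy g 0))).
Local Notation p := (proj_tangent g (cdx g 0) (cdy g 0)).
Local Notation q := (cross_tangent g (cdx g 0) (cdy g 0)).
Local Notation X := (proj_curve g (cdx g 0) (cdy g 0)).
Local Notation Y := (cross_curve g (cdx g 0) (cdy g 0)).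

Definition tangent_close u := 0 < p u /\ Rabs (q u) <= p u / 2.

Lemma initial_tangent_nonzero : 0 < vx ^ 2 + vy ^ 2.
Proof. apply (proj1 arc); lra. Qed.

Lemma proj_curve_increment s : 0 <= s <= 1 -> X s - X 0 <= 2 * M * h.
Proof.
  intros Hs. destruct arc as [_ [_ [Hin _]]].
  pose proof (in_elem_proj_diff k a b h vx vy _ _ (Hin s Hs) (Hin 0 ltac:(lra))) as B.
  apply Rabs_le_inv in B. unfold gam, proj_curve in *; simpl in B. lra.
Qed.

Lemma cross_tangent_le s : 0 <= s <= 1 -> (forall u, 0 <= u <= s -> tangent_close u) ->
  Rabs (q s) <= 4 * kappa * h * p s.
Proof.
  intros Hs Hclose. destruct arc as [Hreg [Hcurv _]].
  destruct (Rmax_abs_pos vx vy initial_tangent_nonzero) as [HM HM2].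
  assert (Hps : 0 < p s) by (apply Hclose; lra).
  assert (Hslope : Rabs (q s / p s - q 0 / p 0) <= 2 * kappa / M * X s - 2 * kappa / M * X 0).
  { apply (Rabs_increment_le (fun u => q u / p u) (fun u => 2 * kappa / M * X u) (fun u =>
      ((vx * cddy g u - vy * cddx g u) * p u - (vx * cddx g u + vy * cddy g u) * q u) / Rsqr (p u))
      (fun u => 2 * kappa / M * p u) 0 s); [lra| | |].
    - intros c Hc. apply derivable_pt_lim_div;
        [apply cross_tangent_derive|apply proj_tangent_derive|].
      apply Rgt_not_eq, Hclose, Hc.
    - intros c _. apply derivable_pt_lim_scal, proj_curve_derive.
    - intros c Hc. destruct (Hclose c Hc) as [Hpc Hqc].
      unfold proj_tangent, cross_tangent in *.
      apply slope_derivative_bound; auto; [apply Hreg|apply Hcurv]; lra. }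
  assert (Hq0 : q 0 = 0) by (unfold cross_tangent; ring).
  rewrite Hq0 in Hslope. unfold Rdiv in Hslope.
  rewrite Rmult_0_l, Rminus_0_r, Rabs_mult, (Rabs_right (/ _)) in Hslope
    by (left; apply Rinv_0_lt_compat; lra).
  assert (HX := proj_curve_increment s Hs).
  assert (Hratio : Rabs (q s) * / p s <= 4 * kappa * h).
  { eapply Rle_trans; [exact Hslope|].
    assert (0 <= 2 * kappa * / M) by (assert (0 < / M) by (apply Rinv_0_lt_compat; lra); nra).
    apply Rle_trans with (2 * kappa * / M * (2 * M * h)); [nra|].
    right; field; lra. }
  apply Rmult_le_reg_r with (/ p s); [apply Rinv_0_lt_compat; lra|].
  replace (4 * kappa * h * p s * / p s) with (4 * kappa * h) by (field; lra).
  exact Hratio.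
Qed.

Hypothesis h_small : 16 * kappa * h <= 1.

(* Along the good region the angle bound improves from 1/2 to 4κh <= 1/4, which
   makes the region both closed and open in [0,1]. *)
Lemma tangent_close_all t : 0 <= t <= 1 -> tangent_close t.
Proof.
  assert (Hreg := proj1 arc).
  assert (Hnorm : forall u, (vx ^ 2 + vy ^ 2) * (cdx g u ^ 2 + cdy g u ^ 2) = p u ^ 2 + q u ^ 2)
    by (intros; unfold proj_tangent, cross_tangent; ring).
  assert (H0 := initial_tangent_nonzero).
  apply real_induction; [lra| | |].
  - unfold tangent_close, proj_tangent, cross_tangent. split; [nra|].
    replace (vx * vy - vy * vx) with 0 by ring. rewrite Rabs_R0. nra.
  - intros t' Ht HP.
    assert (Hleft : forall s, 0 <= s < t' -> Rabs (q s) <= p s / 4).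
    { intros s Hs. pose proof (cross_tangent_le s ltac:(lra) ltac:(intros u Hu; apply HP; lra)).
      destruct (HP s Hs) as [Hp _]. nra. }
    assert (L1 := continuity_pt_ge0_left _ 0 t'
      (continuity_pt_tangent_comb g vx vy (1 / 4) (-1) t') ltac:(lra)
      ltac:(intros s Hs; pose proof (Rabs_le_inv _ _ (Hleft s Hs)); lra)).
    assert (L2 := continuity_pt_ge0_left _ 0 t'
      (continuity_pt_tangent_comb g vx vy (1 / 4) 1 t') ltac:(lra)
      ltac:(intros s Hs; pose proof (Rabs_le_inv _ _ (Hleft s Hs)); lra)).
    cbv beta in L1, L2.
    assert (Hpt : 0 < p t').
    { destruct (Rlt_dec 0 (p t')) as [|Hn]; [assumption|]. exfalso.
      assert (E1 : p t' = 0) by lra. assert (E2 : q t' = 0) by lra.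
      specialize (Hnorm t'). rewrite E1, E2 in Hnorm.
      assert (0 < (vx ^ 2 + vy ^ 2) * (cdx g t' ^ 2 + cdy g t' ^ 2))
        by (apply Rmult_lt_0_compat; [lra|apply Hreg; lra]).
      lra. }
    split; [exact Hpt|]. apply Rabs_le; lra.
  - intros t' Ht HP.
    pose proof (cross_tangent_le t' ltac:(lra) HP) as Hq.
    destruct (HP t' ltac:(lra)) as [Hp _].
    assert (Hq4 : Rabs (q t') <= p t' / 4) by nra. apply Rabs_le_inv in Hq4.
    destruct (continuity_pt_pos_near _ t' (continuity_pt_tangent_comb g vx vy (1 / 2) (-1) t'))
      as [d1 [Hd1 P1]]; [lra|].
    destruct (continuity_pt_pos_near _ t' (continuity_pt_tangent_comb g vx vy (1 / 2) 1 t'))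
      as [d2 [Hd2 P2]]; [lra|].
    exists (Rmin d1 d2); split; [apply Rmin_pos; assumption|].
    intros s Hs. pose proof (Rmin_l d1 d2). pose proof (Rmin_r d1 d2).
    specialize (P1 s ltac:(apply Rabs_def1; lra)). specialize (P2 s ltac:(apply Rabs_def1; lra)).
    cbv beta in P1, P2. split; [lra|]. apply Rabs_le; lra.
Qed.

(* A point of T_int is γ(t) + s γ'(t); its offset from the initial tangent line splits
   into Y(t) - Y(0), controlled by integrating |q| <= 4κh p, and s q(t), controlled
   because the segment from γ(t) to the point stays in T, so |s p(t)| <= 2Mh. *)
Lemma T_int_near_initial_tangent z : T_int k a b h g z ->
  Rabs (vx * (snd z - cy g 0) - vy * (fst z - cx g 0)) <= M * (16 * kappa * h * h).
Proof.
  destruct z as [zx zy]. intros [Hz [t [s0 [Ht [Ex Ey]]]]]. simpl in Ex, Ey |- *.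
  assert (Hcross : forall u, 0 <= u <= 1 -> Rabs (q u) <= 4 * kappa * h * p u).
  { intros u Hu. apply (cross_tangent_le u Hu). intros v Hv; apply tangent_close_all; lra. }
  assert (Hpt : 0 < p t) by apply (tangent_close_all t Ht).
  destruct (Rmax_abs_pos vx vy initial_tangent_nonzero) as [HM _].
  destruct arc as [_ [_ [Hin _]]].
  set (d := 4 * kappa * h) in *.
  assert (0 <= d) by (unfold d; nra).
  assert (HY : Rabs (Y t - Y 0) <= d * X t - d * X 0).
  { apply (Rabs_increment_le Y (fun u => d * X u) q (fun u => d * p u) 0 t); [lra| | |].
    - intros c _; apply cross_curve_derive.
    - intros c _; apply derivable_pt_lim_scal, proj_curve_derive.
    - intros c Hc; apply Hcross; lra. }
  assert (HX := proj_curve_increment t Ht).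
  assert (HS : Rabs s0 * p t <= 2 * M * h).
  { pose proof (in_elem_proj_diff k a b h vx vy (zx, zy) (gam g t) Hz (Hin t Ht)) as B.
    unfold gam in B; simpl in B. rewrite Ex, Ey in B.
    replace (vx * (cx g t + s0 * cdx g t - cx g t) + vy * (cy g t + s0 * cdy g t - cy g t))
      with (s0 * p t) in B by (unfold proj_tangent; ring).
    rewrite Rabs_mult, (Rabs_right (p t)) in B by lra. exact B. }
  assert (HQ : Rabs (s0 * q t) <= d * (2 * M * h)).
  { rewrite Rabs_mult.
    assert (Rabs s0 * Rabs (q t) <= Rabs s0 * (d * p t))
      by (apply Rmult_le_compat_l; [apply Rabs_pos|apply Hcross; lra]).
    nra. }
  replace (vx * (zy - cy g 0) - vy * (zx - cx g 0)) with ((Y t - Y 0) + s0 * q t)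
    by (unfold cross_curve, cross_tangent; rewrite Ex, Ey; ring).
  eapply Rle_trans; [apply Rabs_triang|].
  unfold d in *. nra.
Qed.

End InterfaceArc.

Theorem mainTheorem4 :
  forall kappa : R, 0 <= kappa ->
  exists C : R, exists h0 : R, 0 < h0 /\
    forall (h a b : R) (k : elem_kind) (g : C2_curve),
      0 < h < h0 ->
      interface_arc k a b h kappa g ->
      area_le (T_int k a b h g) (C * h ^ 3).
Proof.
  intros kappa Hk. exists (32 * kappa), (1 / (16 * kappa + 1)).
  split; [apply Rdiv_lt_0_compat; lra|].
  intros h a b k g [Hh Hh0] Harc.
  assert (Hsmall : 16 * kappa * h <= 1).
  { apply Rmult_lt_compat_r with (r := 16 * kappa + 1) in Hh0; [|lra].
    replace (1 / (16 * kappa + 1) * (16 * kappa + 1)) with 1 in Hh0 by (field; lra). nra. }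
  replace (32 * kappa * h ^ 3) with (2 * (16 * kappa * h * h) * h) by ring.
  apply (area_le_near_line _ a b h (cdx g 0) (cdy g 0) (cx g 0) (cy g 0)); [lra|nra| |].
  - exact (initial_tangent_nonzero k a b h kappa g Harc).
  - intros z Hz. split; [|split].
    1, 2: apply (in_elem_cell k a b h z (proj1 Hz)).
    exact (T_int_near_initial_tangent k a b h kappa g Hk Hh Harc Hsmall z Hz).
Qed.
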